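(* Let $V$ be a finite set, $f:2^V\to\mathbb{R}$ non-decreasing and submodular, $b\ge 1$ an integer with $|V|\ge b$, and $A\subseteq V$ an advice set with $|A|=b$. Let $U$ be the output of the learning-augmented algorithm described in the context (run with arbitrary subsets $A_i\subseteq A$, $|A_i|=i$), and let $\mathrm{OPT}\subseteq V$ be any set with $|\mathrm{OPT}|=b$ maximizing $f$ among all $b$-element subsets of $V$. Then $f(U)\ge f(A)$ and \[ f(U)\;\ge\;\max_{i\in\{0,1,\dots,b-1\}}\left[f(A_i)+\frac{1-\frac1e}{\left\lceil \frac{|\mathrm{OPT}\setminus A_i|}{b-i}\right\rceil}\,\bigl(f(\mathrm{OPT}\cup A_i)-f(A_i)\bigr)\right]. \]
   Context: $f$ non-decreasing means $f(X)\le f(Y)$ for $X\subseteq Y$; submodular means $f(X\cup\{e\})-f(X)\ge f(Y\cup\{e\})-f(Y)$ for $X\subseteq Y\subseteq V$, $e\notin Y$. Learning-augmented algorithm: choose subsets $A_0,A_1,\dots,A_b$ of $A$ with $|A_i|=i$ (so $A_0=\emptyset$, $A_b=A$). For each $i\in\{0,\dots,b\}$: start with $B_i=\emptyset$; while $|B_i|<b-i$, add to $B_i$ an element $e\in V\setminus(A_i\cup B_i)$ maximizing $f(A_i\cup B_i\cup\{e\})-f(A_i\cup B_i)$. Set $U_i=A_i\cup B_i$ (so $|U_i|=b$). Output $U=U_{i^*}$ where $i^*$ maximizes $f(U_i)$ over $i\in\{0,\dots,b\}$. *)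

From mathcomp Require Import all_boot all_order all_algebra.
From mathcomp Require Import reals sequences exp.
Set Implicit Arguments. Unset Strict Implicit. Unset Printing Implicit Defensive.
Import Order.TTheory GRing.Theory Num.Theory.
Local Open Scope ring_scope.

Section Defs.
Variables (R : realType) (V : finType).
Implicit Types (f : {set V} -> R) (X Y B : {set V}).

Definition nondecreasing_setfun f := forall X Y, X \subset Y -> f X <= f Y.

Definition submodular_setfun f := forall X Y (e : V), X \subset Y -> e \notin Y ->
  f (e |: Y) - f Y <= f (e |: X) - f X.

(* [greedy_run f X k B]: B is a possible set produced by k steps of the greedy
   procedure started from X: at each step an element e outside X :|: B (current)
   maximizing the marginal gain f (X :|: B :|: {e}) - f (X :|: B) is added
   (ties broken arbitrarily). *)
Inductive greedy_run f X : nat -> {set V} -> Prop :=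
| greedy0 : greedy_run f X 0 set0
| greedyS k B (e : V) :
    greedy_run f X k B ->
    e \notin X :|: B ->
    (forall e' : V, e' \notin X :|: B ->
        f (e' |: (X :|: B)) - f (X :|: B) <= f (e |: (X :|: B)) - f (X :|: B)) ->
    greedy_run f X k.+1 (e |: B).

End Defs.

Definition ceil_div (m n : nat) : nat := (m + n.-1) %/ n.

From mathcomp Require Import all_boot all_order all_algebra.
From mathcomp Require Import reals sequences exp.
From mathcomp Require Import ring lra zify.
Set Implicit Arguments. Unset Strict Implicit.
Import Order.TTheory GRing.Theory Num.Theory.
Local Open Scope ring_scope.

(* Fix i < b, X := A_i, k := b - i, D := f (OPT :|: X) - f X, and N >= |OPT \ X|.
   By submodularity each greedy step from X :|: B gains at least 1/N of the
   remaining gap f (OPT :|: X) - f (X :|: B), so after k steps the gap is at most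
   y D with y := (1 - 1/N)^k.  Choosing N := c k with c := ceil(|OPT \ X| / k)
   gives y^c <= 1/e, and Bernoulli's inequality 1 - y^c <= c (1 - y) turns this
   into f (X :|: B_i) >= f X + (1 - 1/e)/c * D.  The output maximizes f over
   all the candidates X :|: B_i, and the candidate for i = b is A itself. *)

Lemma one_sub_expr_le (R : realDomainType) (y : R) (c : nat) :
  0 <= y -> y <= 1 -> 1 - y ^+ c <= c%:R * (1 - y).
Proof.
move=> y_ge0 y_le1; elim: c => [|c IH]; first by rewrite expr0 subrr mul0r.
have yc_le1 := exprn_ile1 c y_ge0 y_le1.
have yc_ge0 := exprn_ge0 c y_ge0.
rewrite exprS -addn1 natrD; nra.
Qed.

Lemma expr_one_sub_invn_le (R : realType) (n : nat) : (0 < n)%N ->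
  (1 - (n%:R : R)^-1) ^+ n <= (expR 1)^-1.
Proof.
move=> n_gt0.
have n_pos : 0 < (n%:R : R) by rewrite ltr0n.
have base_ge0 : 0 <= 1 - (n%:R : R)^-1 by rewrite subr_ge0 invf_le1 // ler1n.
have base_le : 1 - (n%:R : R)^-1 <= expR (- n%:R^-1) by exact: expR_ge1Dx.
apply: le_trans (lerXn2r n _ _ base_le) _; rewrite ?nnegrE ?expR_ge0 //.
by rewrite -expRM_natl mulrN mulfV ?gt_eqF // expRN.
Qed.

Lemma leq_mul_ceil_div (m k : nat) : (0 < k)%N -> (m <= ceil_div m k * k)%N.
Proof.
move=> k_gt0; rewrite /ceil_div.
have := divn_eq (m + k.-1) k; have := ltn_pmod (m + k.-1) k_gt0; lia.
Qed.

Section Greedy.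
Variables (R : realType) (V : finType) (f : {set V} -> R).
Hypothesis f_mono : nondecreasing_setfun f.
Hypothesis f_submod : submodular_setfun f.

Lemma gain_ge0 (S : {set V}) (e : V) : 0 <= f (e |: S) - f S.
Proof. by rewrite subr_ge0; apply: f_mono; apply: subsetUr. Qed.

Lemma gainU_le_sum_gains (S T : {set V}) :
  f (S :|: T) - f S <= \sum_(p in T) (f (p |: S) - f S).
Proof.
have {1}-> : T = [set x in enum T] by apply/setP => x; rewrite inE mem_enum.
rewrite -big_enum; elim: (enum T) => [|p s IH].
  have -> : [set x in [::]] = set0 :> {set V} by apply/setP => x; rewrite !inE.
  by rewrite setU0 subrr big_nil.
set Y := S :|: [set x in s].
have -> : S :|: [set x in p :: s] = p |: Y.
  by apply/setP => x; rewrite !inE; case: (x == p); case: (x \in S).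
have gainY : f (p |: Y) - f Y <= f (p |: S) - f S.
  have [pY | pNY] := boolP (p \in Y).
    by rewrite (setUidPr _) ?sub1set // subrr gain_ge0.
  exact: f_submod (subsetUl _ _) pNY.
rewrite big_cons (_ : f (p |: Y) - f S = f (p |: Y) - f Y + (f Y - f S)); last by ring.
exact: lerD.
Qed.

Lemma greedy_step_gap (OPT X B : {set V}) (e : V) (N : nat) :
  (0 < N)%N -> (#|OPT :\: X| <= N)%N ->
  (forall e' : V, e' \notin X :|: B ->
     f (e' |: (X :|: B)) - f (X :|: B) <= f (e |: (X :|: B)) - f (X :|: B)) ->
  f (OPT :|: X) - f (e |: (X :|: B)) <= (1 - N%:R^-1) * (f (OPT :|: X) - f (X :|: B)).
Proof.
move=> N_gt0 missing_le_N e_max.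
set S := X :|: B; set g := f (e |: S) - f S; set D := f (OPT :|: X) - f S.
have D_le_sum : D <= \sum_(p in OPT :\: S) (f (p |: S) - f S).
  apply: le_trans (gainU_le_sum_gains S (OPT :\: S)); rewrite lerD2r.
  apply: f_mono; apply/subsetP => x; rewrite /S !inE.
  by case: (x \in X); case: (x \in B); case: (x \in OPT).
have sum_le : \sum_(p in OPT :\: S) (f (p |: S) - f S) <= #|OPT :\: S|%:R * g.
  rewrite mulr_natl -sumr_const; apply: ler_sum => p; rewrite inE => /andP[pNS _].
  exact: e_max.
have card_le : (#|OPT :\: S| <= N)%N.
  by apply: leq_trans missing_le_N; apply/subset_leq_card/setDS/subsetUl.
have D_le_Ng : D <= N%:R * g.
  apply: le_trans (le_trans D_le_sum sum_le) _.
  by rewrite ler_wpM2r ?gain_ge0 ?ler_nat.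
have N_pos : 0 < (N%:R : R) by rewrite ltr0n.
have D_div_le : D / N%:R <= g by rewrite ler_pdivrMr // mulrC.
rewrite -/S (_ : f (OPT :|: X) - f (e |: S) = D - g); last by rewrite /D /g; ring.
rewrite mulrBl mul1r mulrC; lra.
Qed.

Lemma greedy_run_gap (OPT X B : {set V}) (N j : nat) :
  (0 < N)%N -> (#|OPT :\: X| <= N)%N -> greedy_run f X j B ->
  f (OPT :|: X) - f (X :|: B) <= (1 - N%:R^-1) ^+ j * (f (OPT :|: X) - f X).
Proof.
move=> N_gt0 missing_le_N; elim => [|k B' e _ IH _ e_max].
  by rewrite setU0 expr0 mul1r.
have ratio_ge0 : 0 <= 1 - (N%:R : R)^-1.
  by rewrite subr_ge0 invf_le1 ?ltr0n // ler1n.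
rewrite setUCA exprS -mulrA.
exact: le_trans (greedy_step_gap N_gt0 missing_le_N e_max) (ler_wpM2l ratio_ge0 IH).
Qed.

Lemma greedy_run0 (X B : {set V}) : greedy_run f X 0 B -> B = set0.
Proof. by move=> run0; inversion run0. Qed.

(* If OPT \ X is empty then [c = 0] and the bound degenerates to f X <= f (X :|: B),
   since [0^-1 = 0]. *)
Lemma greedy_run_approx (OPT X B : {set V}) (k : nat) :
  (0 < k)%N -> greedy_run f X k B ->
  f X + (1 - (expR 1)^-1) / (ceil_div #|OPT :\: X| k)%:R * (f (OPT :|: X) - f X)
    <= f (X :|: B).
Proof.
move=> k_gt0 runB.
set c := ceil_div #|OPT :\: X| k; set D := f (OPT :|: X) - f X.
have D_ge0 : 0 <= D by rewrite subr_ge0; apply: f_mono; apply: subsetUr.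
have [c0 | c_gt0] := posnP c.
  by rewrite c0 invr0 mulr0 mul0r addr0; apply: f_mono; apply: subsetUl.
have ck_gt0 : (0 < c * k)%N by rewrite muln_gt0 c_gt0.
have gap := greedy_run_gap ck_gt0 (leq_mul_ceil_div _ k_gt0) runB.
set y := (1 - ((c * k)%N%:R : R)^-1) ^+ k in gap.
have base_ge0 : 0 <= 1 - ((c * k)%N%:R : R)^-1.
  by rewrite subr_ge0 invf_le1 ?ltr0n // ler1n.
have inv_ge0 : 0 <= ((c * k)%N%:R : R)^-1 by rewrite invr_ge0 ler0n.
have y_ge0 : 0 <= y by apply: exprn_ge0.
have y_le1 : y <= 1 by apply: exprn_ile1 => //; lra.
have yc_le : y ^+ c <= (expR 1)^-1.
  by rewrite /y -exprM [(k * c)%N]mulnC; apply: expr_one_sub_invn_le.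
have c_pos : 0 < (c%:R : R) by rewrite ltr0n.
have ratio_le : (1 - (expR 1)^-1) / c%:R <= 1 - y.
  have := one_sub_expr_le c y_ge0 y_le1.
  by rewrite ler_pdivrMr // mulrC; lra.
have := ler_wpM2r D_ge0 ratio_le; rewrite /D; lra.
Qed.

End Greedy.

Theorem mainTheorem1 (R : realType) (V : finType) (f : {set V} -> R) (b : nat)
  (A : {set V}) (As Bs : nat -> {set V}) (istar : nat) (OPT : {set V}) :
  nondecreasing_setfun f -> submodular_setfun f ->
  (1 <= b)%N -> (b <= #|V|)%N ->
  #|A| = b ->
  (forall i, (i <= b)%N -> As i \subset A /\ #|As i| = i) ->
  (forall i, (i <= b)%N -> greedy_run f (As i) (b - i) (Bs i)) ->
  (istar <= b)%N ->
  (forall j, (j <= b)%N -> f (As j :|: Bs j) <= f (As istar :|: Bs istar)) ->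
  #|OPT| = b ->
  (forall S : {set V}, #|S| = b -> f S <= f OPT) ->
  let U := As istar :|: Bs istar in
  f A <= f U /\
  (forall i, (i < b)%N ->
     f (As i) + (1 - (expR 1)^-1) / (ceil_div #|OPT :\: As i| (b - i))%:R
                * (f (OPT :|: As i) - f (As i)) <= f U).
Proof.
move=> f_mono f_submod _ _ cardA As_sub runs _ U_max _ _ U; split.
  have [sub_b card_b] := As_sub b (leqnn b).
  have <- : As b = A by apply/eqP; rewrite eqEcard sub_b cardA card_b leqnn.
  have := runs b (leqnn b); rewrite subnn => /greedy_run0 B0.
  by have := U_max b (leqnn b); rewrite B0 setU0.
move=> i i_lt_b; apply: le_trans (U_max i (ltnW i_lt_b)).
apply: greedy_run_approx => //; first by rewrite subn_gt0.
exact: runs (ltnW i_lt_b).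
Qed.
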